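(* Let $M\cong\mathbb{Z}^n$ be a lattice, $\mathbb{T}=\mathrm{Spec}\,\mathbb{C}[M]$, and identify the automorphism group of the variety $\mathbb{T}$ with $\mathrm{Aut}(\mathbb{T})=\mathbb{T}\rtimes\mathrm{GL}(M)$ (translations by $\mathbb{T}$, and $A\in\mathrm{GL}(M)$ acting via $\chi^m\mapsto\chi^{A(m)}$). Let $\mathbb{W}_1,\mathbb{W}_2$ be finite subgroups of $\mathrm{GL}(M)$ and $G_i=\mathbb{T}\rtimes\mathbb{W}_i\subset\mathrm{Aut}(\mathbb{T})$ with their natural actions on $\mathbb{T}$. The following are equivalent: (a) there exist an isomorphism $\varphi\colon G_1\to G_2$ and a $\varphi$-equivariant biregular map $\Phi\colon\mathbb{T}\to\mathbb{T}$; (b) $G_1$ and $G_2$ are conjugate in $\mathrm{Aut}(\mathbb{T})$; (c) $\mathbb{W}_1$ and $\mathbb{W}_2$ are conjugate in $\mathrm{GL}(M)$.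
   Context: For a group homomorphism $\varphi\colon G_1\to G_2$, a map $\Phi\colon\mathbb{T}\to\mathbb{T}$ is $\varphi$-equivariant if $\Phi(g\cdot x)=\varphi(g)\cdot\Phi(x)$ for all $g\in G_1$, $x\in\mathbb{T}$. *)

From HB Require Import structures.
From mathcomp Require Import all_boot all_order all_algebra.
From mathcomp Require Import complex.
From mathcomp Require Import reals.

Set Implicit Arguments.
Unset Strict Implicit.
Unset Printing Implicit Defensive.

Import Order.TTheory GRing.Theory Num.Theory.
Local Open Scope ring_scope.

Section Torus.
Variables (R : realType) (n : nat).

(* The lattice M = Z^n is 'rV[int]_n; GL(M) = invertible integer matrices
   (A \in unitmx).  A point of T = Spec C[M] = Hom(M, C^x) is recorded by
   its values on the standard basis: a row vector of nonzero complex numbers. *)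
Definition torus_pred (x : 'rV[R[i]]_n) : bool := [forall j, x 0 j != 0].
Definition torus := {x : 'rV[R[i]]_n | torus_pred x}.

Lemma torus_pred1 : torus_pred (const_mx 1).
Proof. by apply/forallP => j; rewrite mxE oner_neq0. Qed.

Definition torus1 : torus := exist _ (const_mx 1) torus_pred1.

Definition chi (m : 'rV[int]_n) (x : torus) : R[i] :=
  \prod_(j < n) ((val x) 0 j) ^ (m 0 j).

Definition tmul (t x : torus) : torus :=
  insubd torus1 (\row_j ((val t) 0 j * (val x) 0 j)).

(* Action of A in GL(M) on T, characterised by chi^m o (act A) = chi^(m A),
   i.e. A acts via chi^m |-> chi^(A(m)) (M as row vectors, A acting on the
   right); act (A *m B) = act A \o act B. *)
Definition act (A : 'M[int]_n) (x : torus) : torus :=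
  insubd torus1 (\row_j chi (row j A) x).

Definition aut (t : torus) (A : 'M[int]_n) : torus -> torus :=
  fun x => tmul t (act A x).

Definition in_Aut (h : torus -> torus) : Prop :=
  exists t A, A \in unitmx /\ h = aut t A.

Definition semidirect (W : {pred 'M[int]_n}) (g : torus -> torus) : Prop :=
  exists t A, A \in W /\ g = aut t A.

Definition finite_GL_subgroup (W : {pred 'M[int]_n}) : Prop :=
  [/\ exists s : seq 'M[int]_n, forall A, A \in W <-> A \in s,
      forall A, A \in W -> A \in unitmx,
      1%:M \in W,
      forall A B, A \in W -> B \in W -> A *m B \in W
    & forall A, A \in W -> invmx A \in W].

(* Regular functions on T: elements of C[M], i.e. finite C-linear
   combinations of characters. *)
Definition regular_fun (f : torus -> R[i]) : Prop :=
  exists s : seq (R[i] * 'rV[int]_n),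
    forall x, f x = \sum_(p <- s) p.1 * chi p.2 x.

(* A morphism T -> T: pullback sends C[M] into C[M]. *)
Definition regular_map (F : torus -> torus) : Prop :=
  forall m, regular_fun (fun x => chi m (F x)).

Definition biregular (F : torus -> torus) : Prop :=
  exists G : torus -> torus,
    [/\ cancel F G, cancel G F, regular_map F & regular_map G].

Definition group_iso (G1 G2 : (torus -> torus) -> Prop)
    (phi : (torus -> torus) -> (torus -> torus)) : Prop :=
  [/\ forall g, G1 g -> G2 (phi g),
      forall g h, G1 g -> G1 h -> phi g = phi h -> g = h,
      forall g2, G2 g2 -> exists2 g, G1 g & phi g = g2
    & forall g h, G1 g -> G1 h -> phi (g \o h) = phi g \o phi h].

Definition equivariant (G1 : (torus -> torus) -> Prop)
    (phi : (torus -> torus) -> (torus -> torus)) (Phi : torus -> torus) :=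
  forall g, G1 g -> forall x, Phi (g x) = phi g (Phi x).

(* G2 = h G1 h^{-1} for some h in Aut(T) (h is bijective, so
   g2 \o h = h \o g1 iff g2 = h g1 h^{-1}). *)
Definition conj_in_Aut (G1 G2 : (torus -> torus) -> Prop) : Prop :=
  exists2 h, in_Aut h &
    forall g2, G2 g2 <-> exists2 g1, G1 g1 & g2 \o h = h \o g1.

Definition conj_in_GL (W1 W2 : {pred 'M[int]_n}) : Prop :=
  exists2 P : 'M[int]_n, P \in unitmx &
    forall A, A \in W2 <-> exists2 B, B \in W1 & A = P *m B *m invmx P.

End Torus.

From HB Require Import structures.
From mathcomp Require Import all_boot all_order all_algebra.
From mathcomp Require Import complex.
From mathcomp Require Import reals.
From mathcomp Require Import boolp zify.

(* Every morphism T -> T has the form x |-> t . A(x): its coordinates are units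
   of C[M], and the units of a Laurent polynomial ring are monomials.  (Restrict
   to a one-parameter subgroup z |-> (z^(w_k))_k whose weight w separates the
   finitely many exponents involved; a Laurent polynomial in one variable with no
   zero on C^x is a monomial since C is algebraically closed.)  So a biregular
   equivariant Phi is an element (t0, P) of Aut(T), equivariance reads
   phi(g) = Phi g Phi^-1, and as an element of Aut(T) determines its linear part,
   W2 = P W1 P^-1.  Conversely, conjugation by (1, P) maps T x| W1 onto
   T x| P W1 P^-1, and conjugation by any h in Aut(T) is an isomorphism for which
   h itself is equivariant. *)

Set Implicit Arguments.
Unset Strict Implicit.
Unset Printing Implicit Defensive.

Import Order.TTheory GRing.Theory Num.Theory.
Local Open Scope ring_scope.

Lemma expfz_inj (F : numFieldType) (x : F) : 0 < x -> x != 1 -> injective (exprz x).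
Proof.
move=> x_gt0 x_neq1 a b xab.
have x_neq0 : x != 0 by rewrite gt_eqF.
have : x ^ (a - b) == 1 by rewrite expfzDr // xab -expfzDr // subrr expr0z.
case E: (a - b) => [k|k];
  rewrite ?invr_eq1 pexprn_eq1 ?ltW // (negbTE x_neq1) orbF => /eqP // k0.
by apply: subr0_eq; rewrite E k0.
Qed.

Section ExpfzBig.
Variables (F : fieldType) (I : Type) (r : seq I) (P : pred I).

Lemma expfz_prod (f : I -> F) (e : int) :
  (\prod_(i <- r | P i) f i) ^ e = \prod_(i <- r | P i) f i ^ e.
Proof. by apply: (big_morph (fun y => y ^ e)) => [y z|]; rewrite ?expfzMl ?exp1rz. Qed.

Lemma expfz_sum (x : F) (f : I -> int) : x != 0 ->
  x ^ (\sum_(i <- r | P i) f i) = \prod_(i <- r | P i) x ^ f i.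
Proof.
by move=> x0; apply: (big_morph (exprz x)) => [a b|]; rewrite ?expfzDr ?expr0z.
Qed.

End ExpfzBig.

Lemma poly_monomial_of_no_nonzero_root (F : closedFieldType) (p : {poly F}) :
  (forall z, z != 0 -> ~~ root p z) -> p = lead_coef p *: 'X^((size p).-1).
Proof.
move=> nroot; have [r pE] := closed_field_poly_normal p.
have r0 : forall z, z \in r -> z = 0.
  move=> z zr; apply/eqP; apply: contraT => /nroot.
  rewrite /root pE hornerZ horner_prod (big_rem z) //= hornerXsubC subrr.
  by rewrite mul0r mulr0 eqxx.
have Xr : \prod_(z <- r) ('X - z%:P) = 'X^(size r) :> {poly F}.
  elim: r r0 {pE} => [|z r IHr] r0; first by rewrite big_nil.
  rewrite big_cons (r0 z) ?mem_head // subr0 IHr ?exprS // => y yr.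
  by apply: r0; rewrite inE yr orbT.
have lc_neq0 : lead_coef p != 0.
  rewrite lead_coef_eq0; apply: contraNneq (nroot 1 (oner_neq0 _)) => ->.
  by rewrite root0.
have size_p : size p = (size r).+1 by rewrite {1}pE Xr size_scale // size_polyXn.
by rewrite {1}pE Xr size_p.
Qed.

Section FormalSums.
Variables (R : pzSemiRingType) (K : eqType).

Definition coef_of (s : seq (R * K)) (k : K) : R := \sum_(p <- s | p.2 == k) p.1.

Lemma sum_by_coef_of (s : seq (R * K)) (F : K -> R) :
  \sum_(p <- s) p.1 * F p.2 = \sum_(k <- undup (map snd s)) coef_of s k * F k.
Proof.
transitivity (\sum_(k <- undup (map snd s))
                \sum_(p <- s) (if p.2 == k then p.1 * F p.2 else 0)); last first.
  apply: eq_bigr => k _; rewrite mulr_suml [RHS]big_mkcond; apply: eq_bigr => p _.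
  by case: eqP => [->|]; rewrite ?mul0r.
rewrite exchange_big /=; apply: eq_big_seq => p ps.
rewrite (bigD1_seq p.2) ?undup_uniq ?mem_undup ?map_f //= eqxx big1 ?addr0 //.
by move=> k /negbTE kp; rewrite eq_sym kp.
Qed.

Lemma coef_of_notin (s : seq (R * K)) k : k \notin map snd s -> coef_of s k = 0.
Proof.
move=> kNs; rewrite /coef_of big1_seq // => p /andP [/eqP pk ps].
by move: kNs; rewrite -pk map_f.
Qed.

Lemma sum_single_coef_of (s : seq (R * K)) (F : K -> R) (k0 : K) :
  (forall k, k != k0 -> coef_of s k = 0) ->
  \sum_(p <- s) p.1 * F p.2 = coef_of s k0 * F k0.
Proof.
move=> coef0; rewrite sum_by_coef_of.
have [k0s|k0Ns] := boolP (k0 \in undup (map snd s)).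
  by rewrite (bigD1_seq k0) ?undup_uniq //= big1 ?addr0 // => k /coef0 ->; rewrite mul0r.
rewrite coef_of_notin -1?mem_undup // mul0r big1_seq // => k /andP [_ ks].
by rewrite coef0 ?mul0r //; apply: contraNneq k0Ns => <-.
Qed.

End FormalSums.

Section LaurentUnits.
Variable F : closedFieldType.

Definition laurent_eval (a : seq (F * int)) (z : F) : F := \sum_(p <- a) p.1 * z ^ p.2.

Lemma laurent_unit_monomial (a b : seq (F * int)) :
  (forall z, z != 0 -> laurent_eval a z * laurent_eval b z = 1) ->
  exists e0, forall e, e != e0 -> coef_of a e = 0.
Proof.
move=> ab1.
(* Multiplying by z^N clears denominators: P.[z] = z^N * laurent_eval a z. *)
pose N : nat := \sum_(p <- a) absz p.2.
have N_ge : forall p, p \in a -> 0 <= p.2 + N%:Z.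
  move=> p pa; have : (absz p.2 <= N)%N by rewrite /N (big_rem p) //= leq_addr.
  by lia.
clearbody N.
pose P : {poly F} := \sum_(p <- a) p.1 *: 'X^(absz (p.2 + N%:Z)).
have hornerP : forall z, z != 0 -> P.[z] = z ^+ N * laurent_eval a z.
  move=> z z0; rewrite horner_sum mulr_sumr; apply: eq_big_seq => p pa.
  have zE : z ^+ absz (p.2 + N%:Z) = z ^ p.2 * z ^+ N.
    by rewrite -[LHS]/(z ^ (Posz _)) gez0_abs ?N_ge // expfzDr.
  by rewrite hornerZ hornerXn zE mulrA mulrC.
have coefP : forall e, 0 <= e + N%:Z -> P`_(absz (e + N%:Z)) = coef_of a e.
  move=> e eN; rewrite coef_sumMXn big_seq_cond [RHS]big_seq_cond.
  apply: eq_bigl => p /=; case pa: (p \in a) => //=.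
  apply/eqP/eqP => [E|->//]; apply: (@addIr _ N%:Z).
  by rewrite -[LHS]gez0_abs ?N_ge // -[RHS]gez0_abs // E.
have PE : P = lead_coef P *: 'X^((size P).-1).
  apply: poly_monomial_of_no_nonzero_root => z z0; rewrite /root hornerP //.
  rewrite mulf_eq0 negb_or expf_neq0 //=; apply/eqP => a0.
  by have /eqP := ab1 z z0; rewrite a0 mul0r eq_sym oner_eq0.
exists ((size P).-1%:Z - N%:Z) => e ne.
have [eN|eN] := boolP (0 <= e + N%:Z).
  rewrite -coefP // {1}PE coefZ coefXn; case: eqP => [E|]; last by rewrite mulr0.
  by move: ne; rewrite -E; lia.
rewrite /coef_of big1_seq // => p /andP [/eqP pe pa].
by move: (N_ge p pa) eN; rewrite pe => ->.
Qed.

End LaurentUnits.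

Definition pairing n (m : 'rV[int]_n) (w : 'I_n -> int) : int := \sum_k m 0 k * w k.

Lemma exists_separating_weight n (S : seq 'rV[int]_n) :
  exists w : 'I_n -> int, {in S &, injective (fun m => pairing m w)}.
Proof.
(* Kronecker substitution w_k = N^k, with N avoiding the roots of the nonzero
   polynomials sum_k (m - m')_k X^k for m != m' in S. *)
pose Pd (d : 'rV[int]_n) : {poly int} := \sum_(k < n) d 0 k *: 'X^k.
have Pd_neq0 : forall d, d != 0 -> Pd d != 0.
  move=> d; apply: contraNneq => Pd0; apply/eqP/rowP => k.
  have := congr1 (fun p : {poly int} => p`_k) Pd0.
  by rewrite coef_sumMXn coef0 mxE (big_pred1 k).
pose Q := \prod_(m <- S) \prod_(m' <- S | m != m') Pd (m - m').
have Q_neq0 : Q != 0.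
  rewrite prodf_seq_neq0; apply/allP => m _ /=.
  rewrite prodf_seq_neq0; apply/allP => m' _ /=.
  by apply/implyP => mm'; apply: Pd_neq0; rewrite subr_eq0.
pose rs := [seq i%:Z | i <- iota 0 (size Q)].
have : ~~ all (root Q) rs.
  apply/negP => rootsQ.
  have rs_uniq : uniq rs by rewrite map_inj_uniq ?iota_uniq // => i j [].
  by have := max_poly_roots Q_neq0 rootsQ rs_uniq; rewrite size_map size_iota ltnn.
case/allPn => _ /mapP [N _ ->] NQ.
exists (fun k => N%:Z ^+ k) => m m' mS m'S; rewrite /pairing => E.
apply/eqP; apply: contraNT NQ => mm'.
rewrite /root /Q horner_prod prodf_seq_eq0; apply/hasP; exists m => //=.
rewrite horner_prod prodf_seq_eq0; apply/hasP; exists m' => //=; rewrite mm' /=.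
rewrite horner_sum (eq_bigr (fun i => m 0 i * N%:Z ^+ i - m' 0 i * N%:Z ^+ i)).
  by rewrite sumrB E subrr.
by move=> i _; rewrite hornerZ hornerXn !mxE mulrBl.
Qed.

Section Torus.
Variables (R : realType) (n : nat).
Local Notation C := R[i].
Local Notation T := (torus R n).
Local Notation one := (torus1 R n).

Lemma eq_torus (x y : T) : (forall j, val x 0 j = val y 0 j) -> x = y.
Proof. by move=> xy; apply: val_inj; apply/rowP. Qed.

Lemma torus_neq0 (x : T) j : val x 0 j != 0.
Proof. by have /forallP := valP x; apply. Qed.

Lemma chi_neq0 m (x : T) : chi m x != 0.
Proof. by apply/prodf_neq0 => j _; rewrite expfz_neq0 // torus_neq0. Qed.

Lemma torus1E j : val one 0 j = 1.
Proof. by rewrite /= mxE. Qed.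

Lemma tmulE (t x : T) j : val (tmul t x) 0 j = val t 0 j * val x 0 j.
Proof.
rewrite /tmul insubdK ?mxE //.
by apply/forallP => k; rewrite mxE mulf_neq0 // torus_neq0.
Qed.

Lemma actE A (x : T) j : val (act A x) 0 j = chi (row j A) x.
Proof. by rewrite /act insubdK ?mxE //; apply/forallP => k; rewrite mxE chi_neq0. Qed.

Definition tinv (t : T) : T := insubd one (\row_j (val t 0 j)^-1).

Lemma tinvE (t : T) j : val (tinv t) 0 j = (val t 0 j)^-1.
Proof.
rewrite /tinv insubdK ?mxE //.
by apply/forallP => k; rewrite mxE invr_eq0 torus_neq0.
Qed.

Lemma tmulC (t x : T) : tmul t x = tmul x t.
Proof. by apply: eq_torus => j; rewrite !tmulE mulrC. Qed.

Lemma tmulA (t x y : T) : tmul t (tmul x y) = tmul (tmul t x) y.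
Proof. by apply: eq_torus => j; rewrite !tmulE mulrA. Qed.

Lemma tmul1 (x : T) : tmul one x = x.
Proof. by apply: eq_torus => j; rewrite tmulE torus1E mul1r. Qed.

Lemma tmulV (x : T) : tmul (tinv x) x = one.
Proof. by apply: eq_torus => j; rewrite tmulE tinvE torus1E mulVf ?torus_neq0. Qed.

Lemma chi_tmul m (t x : T) : chi m (tmul t x) = chi m t * chi m x.
Proof. by rewrite /chi -big_split; apply: eq_bigr => j _; rewrite tmulE expfzMl. Qed.

Lemma chiN m (x : T) : chi (- m) x = (chi m x)^-1.
Proof. by rewrite /chi -prodfV; apply: eq_bigr => j _; rewrite mxE invr_expz. Qed.

Lemma chi1 m : chi m one = 1.
Proof. by rewrite /chi big1 // => j _; rewrite torus1E exp1rz. Qed.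

Lemma chi_delta j (x : T) : chi (delta_mx 0 j) x = val x 0 j.
Proof.
rewrite /chi (bigD1 j) //= big1 ?mulr1 => [|k /negbTE kj].
  by rewrite mxE !eqxx expr1z.
by rewrite mxE kj andbF expr0z.
Qed.

Lemma chi_act m A (x : T) : chi m (act A x) = chi (m *m A) x.
Proof.
rewrite /chi; under eq_bigr => j _ do rewrite actE /chi expfz_prod.
rewrite exchange_big /=; apply: eq_bigr => k _.
rewrite mxE expfz_sum ?torus_neq0 //.
by apply: eq_bigr => j _; rewrite mxE exprz_exp mulrC.
Qed.

Lemma act_mul A B (x : T) : act (A *m B) x = act A (act B x).
Proof. by apply: eq_torus => j; rewrite [LHS]actE [RHS]actE chi_act row_mul. Qed.

Lemma act1 (x : T) : act 1%:M x = x.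
Proof. by apply: eq_torus => j; rewrite [LHS]actE row1 chi_delta. Qed.

Lemma act_tmul A (t x : T) : act A (tmul t x) = tmul (act A t) (act A x).
Proof.
apply: eq_torus => j; rewrite [LHS]actE [RHS]tmulE chi_tmul.
by congr (_ * _); rewrite actE.
Qed.

Lemma act_torus1 A : act A one = one.
Proof. by apply: eq_torus => j; rewrite [LHS]actE [RHS]torus1E chi1. Qed.

Lemma aut_comp (t s : T) A B (x : T) :
  aut t A (aut s B x) = aut (tmul t (act A s)) (A *m B) x.
Proof. by rewrite /aut act_tmul act_mul tmulA. Qed.

Lemma aut1 (x : T) : aut one 1%:M x = x.
Proof. by rewrite /aut act1 tmul1. Qed.

Definition aut_inv (t : T) P : T -> T := aut (act (invmx P) (tinv t)) (invmx P).

Section AutInverse.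
Variables (t : T) (P : 'M[int]_n).
Hypothesis P_unit : P \in unitmx.

Lemma autK : cancel (aut t P) (aut_inv t P).
Proof.
by move=> x; rewrite /aut_inv aut_comp (mulVmx P_unit) -act_tmul tmulV act_torus1 aut1.
Qed.

Lemma aut_invK : cancel (aut_inv t P) (aut t P).
Proof.
move=> x; rewrite /aut_inv aut_comp -act_mul (mulmxV P_unit) act1.
by rewrite tmulC tmulV aut1.
Qed.

Lemma aut_conj B (x : T) :
  aut one P (aut t B x) = aut (act P t) (P *m B *m invmx P) (aut one P x).
Proof.
rewrite !aut_comp act_torus1 tmul1 [tmul (act P t) _]tmulC tmul1.
by rewrite mulmxKV.
Qed.

End AutInverse.

Definition one_param (w : 'I_n -> int) (z : C) : T := insubd one (\row_k z ^ w k).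

Lemma chi_one_param w m (z : C) : z != 0 -> chi m (one_param w z) = z ^ pairing m w.
Proof.
move=> z0; rewrite /chi /one_param insubdK; last first.
  by apply/forallP => k; rewrite mxE expfz_neq0.
by rewrite /pairing expfz_sum //; apply: eq_bigr => k _; rewrite mxE exprz_exp mulrC.
Qed.

Lemma act_inj A B : @act R n A =1 act B -> A = B.
Proof.
move=> AB; apply/matrixP => j k.
pose e_k (l : 'I_n) : int := (l == k)%:R.
have pairing_e m : pairing m e_k = m 0 k.
  rewrite /pairing (bigD1 k) //= /e_k eqxx mulr1 big1 ?addr0 // => l /negbTE lk.
  by rewrite lk mulr0.
have two_neq0 : (2 : C) != 0 by rewrite pnatr_eq0.
have := congr1 (fun y : T => val y 0 j) (AB (one_param e_k 2)).
rewrite /= [LHS]actE [RHS]actE !chi_one_param // !pairing_e !mxE.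
by apply: expfz_inj; rewrite ?ltr0n ?pnatr_eq1.
Qed.

Lemma aut_inj (t s : T) A B : aut t A =1 aut s B -> t = s /\ A = B.
Proof.
move=> AB; have ts : t = s.
  by have := AB one; rewrite /aut !act_torus1 [tmul t _]tmulC [tmul s _]tmulC !tmul1.
split=> //; subst s; apply: act_inj => x.
by have := congr1 (tmul (tinv t)) (AB x); rewrite /aut !tmulA tmulV !tmul1.
Qed.

Lemma aut_regular (t : T) A : regular_map (aut t A).
Proof.
move=> m; exists [:: (chi m t, m *m A)] => x.
by rewrite big_seq1 /aut chi_tmul chi_act.
Qed.

Lemma regular_unit_monomial (f g : T -> C) :
  regular_fun f -> regular_fun g -> (forall x, f x * g x = 1) ->
  exists c m, forall x, f x = c * chi m x.
Proof.
case=> s fE [s' gE] fg1.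
have [w w_inj] := exists_separating_weight (map snd s).
pose restr (s0 : seq (C * 'rV[int]_n)) := [seq (p.1, pairing p.2 w) | p <- s0].
have restrE s0 z : z != 0 ->
    \sum_(p <- s0) p.1 * chi p.2 (one_param w z) = laurent_eval (restr s0) z.
  move=> z0; rewrite /laurent_eval big_map.
  by apply: eq_bigr => p _; rewrite chi_one_param.
have [e0 coef0] : exists e0, forall e, e != e0 -> coef_of (restr s) e = 0.
  by apply: (@laurent_unit_monomial _ _ (restr s')) => z z0; rewrite -!restrE // -fE -gE.
have coef_restr m : m \in map snd s -> coef_of s m = coef_of (restr s) (pairing m w).
  move=> ms; rewrite /coef_of big_map big_seq_cond [RHS]big_seq_cond.
  apply: eq_bigl => p /=; case ps: (p \in s) => //=.
  by apply/eqP/eqP => [->//|]; apply: w_inj; rewrite ?map_f.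
have [m0 m0_uniq] :
    exists m0, forall m, m \in map snd s -> pairing m w = e0 -> m = m0.
  have [/hasP [m1 m1s /eqP m1e0]|noe0] :=
    boolP (has (fun m => pairing m w == e0) (map snd s)).
    by exists m1 => m ms me0; apply: w_inj; rewrite ?me0.
  exists 0 => m ms me0; case/hasP: noe0; exists m => //; exact/eqP.
exists (coef_of s m0), m0 => x.
rewrite fE (sum_single_coef_of (k0 := m0) (fun m => chi m x)) // => m mm0.
have [ms|mNs] := boolP (m \in map snd s); last exact: coef_of_notin.
by rewrite coef_restr // coef0 //; apply: contraNneq mm0 => /(m0_uniq _ ms) ->.
Qed.

Lemma regular_map_aut (F : T -> T) : regular_map F -> exists t A, F =1 aut t A.
Proof.
move=> F_reg.
have coordE j :
    exists cm : C * 'rV[int]_n, forall x, val (F x) 0 j = cm.1 * chi cm.2 x.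
  have F_unit x : chi (delta_mx 0 j) (F x) * chi (- delta_mx 0 j) (F x) = 1.
    by rewrite chiN mulfV ?chi_neq0.
  have [c [m cmE]] := regular_unit_monomial (F_reg _) (F_reg _) F_unit.
  by exists (c, m) => x; rewrite -chi_delta cmE.
have [cm cmE] := fin_all_exists coordE.
have c_neq0 j : (cm j).1 != 0.
  by have := torus_neq0 (F one) j; rewrite cmE; apply: contraNneq => ->; rewrite mul0r.
have t_torus : torus_pred (\row_j (cm j).1) by apply/forallP => j; rewrite mxE c_neq0.
exists (Sub _ t_torus : T), (\matrix_(j, k) (cm j).2 0 k) => x; apply: eq_torus => j.
rewrite cmE /aut tmulE actE /= mxE; congr (_ * chi _ _).
by apply/rowP => k; rewrite !mxE.
Qed.

Lemma biregular_aut (Phi : T -> T) :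
  biregular Phi -> exists t P, P \in unitmx /\ Phi =1 aut t P.
Proof.
case=> Psi [PhiK PsiK Phi_reg Psi_reg].
have [t [A PhiE]] := regular_map_aut Phi_reg.
have [s [B PsiE]] := regular_map_aut Psi_reg.
exists t, A; split=> //.
have [_ AB] : tmul t (act A s) = one /\ A *m B = 1%:M.
  by apply: aut_inj => x; rewrite -aut_comp -PsiE -PhiE PsiK aut1.
by case/mulmx1_unit: AB.
Qed.

Lemma aut_intertwine (t0 t s : T) P B A : P \in unitmx ->
  (forall x, aut t0 P (aut t B x) = aut s A (aut t0 P x)) -> A = P *m B *m invmx P.
Proof.
move=> P_unit PBA.
have [_ PB] : tmul t0 (act P t) = tmul s (act A t0) /\ P *m B = A *m P.
  by apply: aut_inj => x; rewrite -[LHS]aut_comp PBA aut_comp.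
by rewrite PB mulmxK.
Qed.

End Torus.

Section Conjugacy.
Variables (R : realType) (n : nat).
Local Notation T := (torus R n).
Local Notation one := (torus1 R n).
Local Notation G W := (@semidirect R n W).

Lemma conj_group_iso (G1 G2 : (T -> T) -> Prop) (h hi : T -> T) :
  cancel h hi -> cancel hi h ->
  (forall g2, G2 g2 <-> exists2 g1, G1 g1 & g2 \o h = h \o g1) ->
  group_iso G1 G2 (fun g => h \o g \o hi).
Proof.
move=> hK hiK G2E; split.
- move=> g g1; apply/G2E; exists g => //.
  by apply: funext => x /=; rewrite hK.
- move=> g g' _ _ gg'; apply: funext => x.
  by have := congr1 (fun f => f (h x)) gg' => /=; rewrite !hK => /(can_inj hK).
- move=> g2 /G2E [g1 g1G E]; exists g1 => //.
  by apply: funext => y /=; have /= := congr1 (fun f => f (hi y)) E; rewrite hiK.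
- by move=> g g' _ _; apply: funext => x /=; rewrite hK.
Qed.

Definition equivariantly_isomorphic (W1 W2 : {pred 'M[int]_n}) : Prop :=
  exists phi, group_iso (G W1) (G W2) phi /\
    exists Phi, biregular Phi /\ equivariant (G W1) phi Phi.

Lemma conj_GL_of_equivariant_iso W1 W2 :
  equivariantly_isomorphic W1 W2 -> conj_in_GL W1 W2.
Proof.
case=> phi [[phiG _ phi_onto _] [Phi [Phi_bireg Phi_equiv]]].
have [t0 [P [P_unit PhiE]]] := biregular_aut Phi_bireg.
have conjP t B s A :
    G W1 (aut t B) -> phi (aut t B) = aut s A -> A = P *m B *m invmx P.
  move=> g1 phiE.
  apply: (aut_intertwine (t0 := t0) (t := t) (s := s) P_unit) => x.
  by rewrite -[LHS]PhiE (Phi_equiv _ g1) phiE PhiE.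
exists P => // A; split.
- move=> AW2; have A_G2 : G W2 (aut one A) by exists one, A.
  have [g g1 phigE] := phi_onto _ A_G2.
  case: (g1) => t [B [BW1 gE]]; exists B; first exact: BW1.
  by apply: (conjP t B one); rewrite -gE.
- case=> B BW1 ->; have g1 : G W1 (aut one B) by exists one, B.
  have [s [A' [A'W2 phiE]]] := phiG _ g1.
  by rewrite -(conjP _ _ _ _ g1 phiE).
Qed.

Lemma conj_Aut_of_conj_GL W1 W2 : conj_in_GL W1 W2 -> conj_in_Aut (G W1) (G W2).
Proof.
case=> P P_unit W2E; exists (aut one P); first by exists one, P.
move=> g2; split.
- case=> t [A [AW2 ->]]; have [B BW1 ->] := (W2E A).1 AW2.
  exists (aut (act (invmx P) t) B); first by exists (act (invmx P) t), B.
  by apply: funext => x /=; rewrite (aut_conj _ P_unit) -act_mul (mulmxV P_unit) act1.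
- case=> _ [t [B [BW1 ->]]] E.
  exists (act P t), (P *m B *m invmx P); split; first by apply/W2E; exists B.
  apply: funext => y; rewrite -(aut_invK one P_unit y); move: (aut_inv one P y) => z.
  by rewrite -(aut_conj _ P_unit); exact: (congr1 (fun f => f z) E).
Qed.

Lemma equivariant_iso_of_conj_Aut W1 W2 :
  conj_in_Aut (G W1) (G W2) -> equivariantly_isomorphic W1 W2.
Proof.
case=> _ [t [P [P_unit ->]]] conjG.
exists (fun g => aut t P \o g \o aut_inv t P); split.
  exact: conj_group_iso (autK t P_unit) (aut_invK t P_unit) conjG.
exists (aut t P); split; last by move=> g _ x /=; rewrite autK.
by exists (aut_inv t P); split; [exact: autK | exact: aut_invK | exact: aut_regular ..].
Qed.

End Conjugacy.

Theorem lemma3p1 (R : realType) (n : nat) (W1 W2 : {pred 'M[int]_n}) :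
  finite_GL_subgroup W1 -> finite_GL_subgroup W2 ->
  [<-> (exists phi, group_iso (@semidirect R n W1) (@semidirect R n W2) phi /\
          exists Phi, biregular Phi /\ equivariant (@semidirect R n W1) phi Phi);
       conj_in_Aut (@semidirect R n W1) (@semidirect R n W2);
       conj_in_GL W1 W2].
Proof.
move=> _ _; tfae.
- by move/conj_GL_of_equivariant_iso/conj_Aut_of_conj_GL.
- by move/equivariant_iso_of_conj_Aut/conj_GL_of_equivariant_iso.
- by move/(@conj_Aut_of_conj_GL R)/equivariant_iso_of_conj_Aut.
Qed.
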